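(* Let $\lambda>0$, $Y\sim\mathrm{Poi}(\lambda)$, and let $g_1:\{0,1,2,\dots\}\to\mathbb R$ be defined by $g_1(0)=0$ and, for integers $w\ge1$, $$g_1(w)=\frac{e^\lambda w!}{\lambda^{w+1}}P(Y\le w)-\frac{e^\lambda (w-1)!}{\lambda^{w}}P(Y\le w-1).$$ Then $g_1$ is non-negative and non-decreasing, and for all integers $w\ge1$, $$g_1(w)\le\frac1\lambda+\frac{(w-1)!\,(w-\lambda)_+}{\lambda^{w+1}}e^\lambda ,$$ where $x_+=\max(x,0)$.
   Context: $\mathrm{Poi}(\lambda)$ is the Poisson distribution with mean $\lambda$. *)

From Stdlib Require Import Reals Lra Lia Arith Factorial.
Open Scope R_scope.

Definition poi_pmf (lam : R) (k : nat) : R :=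
  exp (- lam) * lam ^ k / INR (fact k).

Definition poi_cdf (lam : R) (w : nat) : R :=
  sum_f_R0 (poi_pmf lam) w.

Definition g1 (lam : R) (w : nat) : R :=
  match w with
  | O => 0
  | S v => exp lam * INR (fact (S v)) / lam ^ (S (S v)) * poi_cdf lam (S v)
           - exp lam * INR (fact v) / lam ^ (S v) * poi_cdf lam v
  end.

Definition pos_part (x : R) : R := Rmax x 0.

(* Write E(v) = sum_{k<=v} lam^k/k! (Stdlib's [E1 lam v]), so that
   P(Y <= v) = e^{-lam} E(v), and put H(v) = v! E(v) / lam^(v+1), the quantity
   e^lam v!/lam^(v+1) P(Y <= v) appearing in g1.  Then
     g1 w = H w - H (w-1)          (with H(-1) read as H 0, so g1 0 = 0),
     H 0 = 1/lam,   H (v+1) = ((v+1) H v + 1) / lam.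
   From the recurrence one gets the second-difference identity
     lam (g1 (w+2) - g1 (w+1)) = (w+2) g1 (w+1) - w g1 w,
   which, together with g1 0 = 0 <= g1 1, gives monotonicity and
   non-negativity by induction.  For the bound, the recurrence gives
   g1 (v+1) = 1/lam + (v+1-lam)/lam * H v, and H v <= v! e^lam / lam^(v+1)
   because the partial sums E(v) of the exponential series are below e^lam. *)

From Stdlib Require Import Reals Arith Factorial.
From Stdlib Require Import Lra Lia.
Open Scope R_scope.

Definition H (lam : R) (v : nat) : R :=
  INR (fact v) / lam ^ S v * E1 lam v.

Lemma poi_cdf_E1 (lam : R) (v : nat) : poi_cdf lam v = exp (- lam) * E1 lam v.
Proof.
  unfold poi_cdf, E1, poi_pmf.
  induction v as [|v IH]; cbn [sum_f_R0].
  - simpl; field.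
  - rewrite IH; field; apply INR_fact_neq_0.
Qed.

Lemma H_of_cdf (lam : R) (v : nat) :
  0 < lam -> exp lam * INR (fact v) / lam ^ S v * poi_cdf lam v = H lam v.
Proof.
  intros hlam; rewrite poi_cdf_E1; unfold H.
  assert (hexp : exp lam * exp (- lam) = 1)
    by (rewrite <- exp_plus, Rplus_opp_r; apply exp_0).
  assert (hpow : lam ^ S v <> 0) by (apply pow_nonzero; lra).
  transitivity (exp lam * exp (- lam) * (INR (fact v) / lam ^ S v * E1 lam v)).
  - field; exact hpow.
  - rewrite hexp; ring.
Qed.

Lemma g1_diff_H (lam : R) (w : nat) :
  0 < lam -> g1 lam w = H lam w - H lam (pred w).
Proof.
  intros hlam; destruct w as [|v]; simpl pred.
  - simpl; ring.
  - unfold g1; rewrite !H_of_cdf by exact hlam; reflexivity.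
Qed.

Lemma H_0 (lam : R) : 0 < lam -> H lam 0 = / lam.
Proof. intros hlam; unfold H, E1; simpl; field; lra. Qed.

Lemma H_S (lam : R) (v : nat) :
  0 < lam -> H lam (S v) = INR (S v) / lam * H lam v + / lam.
Proof.
  intros hlam; unfold H, E1 at 1; cbn [sum_f_R0]; fold (E1 lam v).
  rewrite fact_simpl, mult_INR.
  assert (lam ^ S v <> 0) by (apply pow_nonzero; lra).
  assert (INR (fact v) <> 0) by apply INR_fact_neq_0.
  assert (INR (S v) <> 0) by (apply not_0_INR; lia).
  change (lam ^ S (S v)) with (lam * lam ^ S v).
  field; repeat split; auto; lra.
Qed.

Lemma lam_g1_S (lam : R) (w : nat) :
  0 < lam -> lam * g1 lam (S w) = INR (S w) * H lam w - INR w * H lam (pred w).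
Proof.
  intros hlam; rewrite g1_diff_H, H_S by exact hlam; simpl pred.
  destruct w as [|v].
  - rewrite H_0 by exact hlam; simpl INR; field; lra.
  - rewrite H_S by exact hlam; simpl pred; rewrite (S_INR (S v)); field; lra.
Qed.

Lemma g1_second_diff (lam : R) (w : nat) :
  0 < lam ->
  lam * (g1 lam (S (S w)) - g1 lam (S w))
  = INR (S (S w)) * g1 lam (S w) - INR w * g1 lam w.
Proof.
  intros hlam.
  rewrite Rmult_minus_distr_l, !lam_g1_S by exact hlam; simpl pred.
  rewrite (g1_diff_H lam (S w)), (g1_diff_H lam w) by exact hlam; simpl pred.
  rewrite !S_INR; ring.
Qed.

Lemma g1_1 (lam : R) : 0 < lam -> g1 lam 1 = / lam / lam.
Proof.
  intros hlam; apply (Rmult_eq_reg_l lam); [|lra].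
  rewrite lam_g1_S, H_0 by exact hlam; simpl; field; lra.
Qed.

Lemma g1_nonneg_mono (lam : R) (w : nat) :
  0 < lam -> 0 <= g1 lam w <= g1 lam (S w).
Proof.
  intros hlam; induction w as [|w [hnonneg hmono]].
  - rewrite g1_1 by exact hlam; simpl g1.
    assert (0 < / lam) by (apply Rinv_0_lt_compat; exact hlam).
    split; [lra|]; left; unfold Rdiv; apply Rmult_lt_0_compat; assumption.
  - split; [lra|].
    assert (hw : 0 <= INR w) by apply pos_INR.
    assert (hdiff : 0 <= lam * (g1 lam (S (S w)) - g1 lam (S w))).
    { rewrite g1_second_diff by exact hlam; rewrite !S_INR; nra. }
    nra.
Qed.

Lemma E1_le_exp (x : R) (v : nat) : 0 <= x -> E1 x v <= exp x.
Proof.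
  intros hx; apply growing_ineq; [|apply E1_cvg].
  intro n; unfold E1; cbn [sum_f_R0].
  assert (0 <= / INR (fact (S n)) * x ^ S n).
  { apply Rmult_le_pos; [left; apply Rinv_0_lt_compat, INR_fact_lt_0|].
    apply pow_le; exact hx. }
  lra.
Qed.

Lemma H_le (lam : R) (v : nat) :
  0 < lam -> H lam v <= INR (fact v) / lam ^ S v * exp lam.
Proof.
  intros hlam; unfold H; apply Rmult_le_compat_l.
  - unfold Rdiv; apply Rmult_le_pos; [apply pos_INR|].
    left; apply Rinv_0_lt_compat, pow_lt; exact hlam.
  - apply E1_le_exp; lra.
Qed.

Lemma H_nonneg (lam : R) (v : nat) : 0 < lam -> 0 <= H lam v.
Proof.
  intros hlam; unfold H; repeat apply Rmult_le_pos.
  - apply pos_INR.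
  - left; apply Rinv_0_lt_compat, pow_lt; exact hlam.
  - unfold E1; apply cond_pos_sum; intro k; apply Rmult_le_pos.
    + left; apply Rinv_0_lt_compat, INR_fact_lt_0.
    + apply pow_le; lra.
Qed.

Lemma g1_S_le (lam : R) (v : nat) :
  0 < lam ->
  g1 lam (S v) <= / lam
    + INR (fact v) * pos_part (INR (S v) - lam) / lam ^ S (S v) * exp lam.
Proof.
  intros hlam.
  set (p := pos_part (INR (S v) - lam)).
  assert (hp : INR (S v) - lam <= p) by apply Rmax_l.
  assert (hp0 : 0 <= p) by apply Rmax_r.
  assert (hg : g1 lam (S v) = / lam + (INR (S v) - lam) / lam * H lam v).
  { rewrite g1_diff_H, H_S by exact hlam; simpl pred; field; lra. }
  assert (hbound : INR (fact v) * p / lam ^ S (S v) * exp lam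
                   = p / lam * (INR (fact v) / lam ^ S v * exp lam)).
  { change (lam ^ S (S v)) with (lam * lam ^ S v).
    field; split; [apply pow_nonzero|]; lra. }
  rewrite hg, hbound; apply Rplus_le_compat_l.
  assert (hinv : 0 < / lam) by (apply Rinv_0_lt_compat; exact hlam).
  apply Rle_trans with (p / lam * H lam v).
  - apply Rmult_le_compat_r; [apply H_nonneg; exact hlam|].
    apply Rmult_le_compat_r; lra.
  - apply Rmult_le_compat_l; [unfold Rdiv; nra|apply H_le; exact hlam].
Qed.

Theorem lemma4p3 (lam : R) (hlam : 0 < lam) :
  (forall w : nat, 0 <= g1 lam w) /\
  (forall w : nat, g1 lam w <= g1 lam (S w)) /\
  (forall w : nat, (1 <= w)%nat ->
     g1 lam w <= / lam
       + INR (fact (w - 1)) * pos_part (INR w - lam) / lam ^ (w + 1) * exp lam).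
Proof.
  split; [intro w; apply (g1_nonneg_mono lam w hlam)|].
  split; [intro w; apply (g1_nonneg_mono lam w hlam)|].
  intros [|v] hw; [lia|].
  replace (S v - 1)%nat with v by lia.
  replace (S v + 1)%nat with (S (S v)) by lia.
  apply g1_S_le; exact hlam.
Qed.
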